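(* Let $A = \{g_n : n \in \mathbb{N}\} \subseteq \mathbb{N}^{\mathbb{N}}$ be an almost disjoint family of functions, let $E \subseteq \mathbb{N}\times\mathbb{N}$, and let $F = \{f_n : n \in \mathbb{N}\} \subseteq \mathbb{N}^{\mathbb{N}}$ be a family not finitely covered by $A$. Then there exists $g : \mathbb{N}\to\mathbb{N}$ that is almost disjoint from every function in $A$, such that $E$ is recursive in $g$, and such that for every $n$ the set $\{k : f_n(k) = g(k)\}$ is infinite.
   Context: Two functions $g_0,g_1\in\mathbb{N}^{\mathbb{N}}$ are almost disjoint if $\{n : g_0(n)=g_1(n)\}$ is finite; an almost disjoint family of functions is a family of pairwise almost disjoint functions. A function $f$ is finitely covered by $A$ if there are $h_0,\dots,h_m\in A$ with $\{k : f(k)\notin\{h_0(k),\dots,h_m(k)\}\}$ finite; $F$ is not finitely covered by $A$ if no member of $F$ is finitely covered by $A$. *)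

From Stdlib Require Import Arith List.
Import ListNotations.

Definition almost_disjoint (g0 g1 : nat -> nat) : Prop :=
  exists N, forall n, g0 n = g1 n -> n < N.

Definition ad_family (A : nat -> (nat -> nat)) : Prop :=
  forall i j, A i <> A j -> almost_disjoint (A i) (A j).

(* f is finitely covered by A: finitely many members h_0..h_m of A such that
   {k : f k not in {h_0 k, ..., h_m k}} is finite. *)
Definition finitely_covered (f : nat -> nat) (A : nat -> (nat -> nat)) : Prop :=
  exists (hs : list nat) (N : nat),
    forall k, N <= k -> exists i, In i hs /\ f k = A i k.

Definition not_finitely_covered (F A : nat -> (nat -> nat)) : Prop :=
  forall n, ~ finitely_covered (F n) A.

(* ---------- Relative computability: partial recursive functions with an
   oracle (Kleene's mu-recursive functions plus an oracle basic function). *)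
Inductive prf : Type :=
| PZero : prf
| PSucc : prf
| PProj : nat -> prf
| POracle : prf
| PComp : prf -> list prf -> prf
| PRec : prf -> prf -> prf
| PMu : prf -> prf.

Inductive eval (g : nat -> nat) : prf -> list nat -> nat -> Prop :=
| ev_zero : forall v, eval g PZero v 0
| ev_succ : forall x v, eval g PSucc (x :: v) (S x)
| ev_proj : forall i v, i < length v -> eval g (PProj i) v (nth i v 0)
| ev_oracle : forall x v, eval g POracle (x :: v) (g x)
| ev_comp : forall f hs v ys z,
    evals g hs v ys -> eval g f ys z -> eval g (PComp f hs) v z
| ev_rec0 : forall f h v z, eval g f v z -> eval g (PRec f h) (0 :: v) z
| ev_recS : forall f h n v y z,
    eval g (PRec f h) (n :: v) y -> eval g h (n :: y :: v) z ->
    eval g (PRec f h) (S n :: v) z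
| ev_mu : forall f v n,
    eval g f (n :: v) 0 ->
    (forall m, m < n -> exists y, eval g f (m :: v) (S y)) ->
    eval g (PMu f) v n
with evals (g : nat -> nat) : list prf -> list nat -> list nat -> Prop :=
| evs_nil : forall v, evals g [] v []
| evs_cons : forall h hs v y ys,
    eval g h v y -> evals g hs v ys -> evals g (h :: hs) v (y :: ys).

Definition recursive_in (E : nat -> nat -> Prop) (g : nat -> nat) : Prop :=
  exists p : prf, forall a b,
    (E a b -> eval g p [a; b] 1) /\ (~ E a b -> eval g p [a; b] 0).

From Stdlib Require Import Arith Cantor List Lia Classical ClassicalEpsilon.
Import ListNotations.

(* The function g is built in stages s = 0, 1, 2, ... along two
   interleaved increasing sequences of positions  c_0 < m_0 < c_1 < m_1 < ...
   - At the meeting position m_s, g copies F_n where s = <n, N> (Cantor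
     pairing); m_s is chosen above c_s where F_n differs from A_0, ..., A_s,
     which is possible precisely because F_n is not finitely covered by A.
   - At the coding position c_s, g points to the next coding position:
     g(c_s) = c_(s+1), where c_(s+1) is chosen larger than m_s and than all of
     A_0(c_s), ..., A_s(c_s), with parity the bit "E(a, b)" for s = <a, b>.
   - Everywhere else, g k = 1 + A_0(k) + ... + A_k(k).
   So g avoids A_m beyond position c_m + m, meets every F_n at arbitrarily
   large positions, and E(a, b) is the parity of g^(<a,b>+1)(0), which a fixed
   oracle program computes. *)

Section OraclePrograms.

Variable g : nat -> nat.

Lemma ev_proj0 x v : eval g (PProj 0) (x :: v) x.
Proof. apply (ev_proj g 0 (x :: v)); simpl; lia. Qed.

Lemma ev_proj1 x y v : eval g (PProj 1) (x :: y :: v) y.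
Proof. apply (ev_proj g 1 (x :: y :: v)); simpl; lia. Qed.

Lemma ev_comp1 f h v y z :
  eval g h v y -> eval g f [y] z -> eval g (PComp f [h]) v z.
Proof. intros Hh Hf; apply ev_comp with (ys := [y]); [repeat constructor |]; assumption. Qed.

Lemma ev_comp2 f h1 h2 v y1 y2 z :
  eval g h1 v y1 -> eval g h2 v y2 -> eval g f [y1; y2] z ->
  eval g (PComp f [h1; h2]) v z.
Proof.
  intros H1 H2 Hf; apply ev_comp with (ys := [y1; y2]); [repeat constructor |]; assumption.
Qed.

Definition addp : prf := PRec (PProj 0) (PComp PSucc [PProj 1]).

Lemma ev_add x y : eval g addp [x; y] (x + y).
Proof.
  induction x as [|x IH].
  - constructor; apply ev_proj0.
  - eapply ev_recS; [exact IH|].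
    apply ev_comp1 with (y := x + y); [apply ev_proj1 | constructor].
Qed.

(* The triangular numbers, in the form used by Cantor.to_nat. *)
Definition trianglep : prf :=
  PRec PZero (PComp addp [PComp PSucc [PProj 0]; PProj 1]).

Lemma ev_triangle n :
  eval g trianglep [n] (nat_rec _ 0 (fun i t => S i + t) n).
Proof.
  induction n as [|n IH].
  - repeat constructor.
  - eapply ev_recS; [exact IH|].
    eapply ev_comp2; [| apply ev_proj1 | apply ev_add].
    apply ev_comp1 with (y := n); [apply ev_proj0 | constructor].
Qed.

Definition cantorp : prf :=
  PComp addp [PProj 1; PComp trianglep [PComp addp [PProj 1; PProj 0]]].

Lemma ev_cantor a b : eval g cantorp [a; b] (to_nat (a, b)).
Proof.
  eapply ev_comp2; [apply ev_proj1 | | apply ev_add].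
  eapply ev_comp1; [| apply ev_triangle].
  eapply ev_comp2; [apply ev_proj1 | apply ev_proj0 | apply ev_add].
Qed.

Definition iteratep : prf := PRec PZero (PComp POracle [PProj 1]).

Lemma ev_iterate n : eval g iteratep [n] (Nat.iter n g 0).
Proof.
  induction n as [|n IH].
  - repeat constructor.
  - eapply ev_recS; [exact IH|].
    apply ev_comp1 with (y := Nat.iter n g 0);
      [apply ev_proj1 | apply (ev_oracle g _ [])].
Qed.

Definition iszerop : prf := PRec (PComp PSucc [PZero]) PZero.

Lemma ev_iszero y : eval g iszerop [y] (Nat.b2n (y =? 0)).
Proof.
  induction y as [|y IH].
  - constructor; eapply ev_comp1; constructor.
  - eapply ev_recS; [exact IH | constructor].
Qed.

(* The parity of n: odd n flips at each successor. *)
Definition parityp : prf := PRec PZero (PComp iszerop [PProj 1]).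

Lemma ev_parity n : eval g parityp [n] (Nat.b2n (Nat.odd n)).
Proof.
  induction n as [|n IH].
  - repeat constructor.
  - eapply ev_recS; [exact IH|].
    eapply ev_comp1; [apply ev_proj1|].
    replace (Nat.b2n (Nat.odd (S n))) with (Nat.b2n (Nat.b2n (Nat.odd n) =? 0));
      [apply ev_iszero|].
    rewrite Nat.odd_succ, <- Nat.negb_odd; now destruct (Nat.odd n).
Qed.

Definition decoderp : prf :=
  PComp parityp [PComp iteratep [PComp PSucc [cantorp]]].

Lemma ev_decoder a b :
  eval g decoderp [a; b] (Nat.b2n (Nat.odd (Nat.iter (S (to_nat (a, b))) g 0))).
Proof.
  eapply ev_comp1; [| apply ev_parity].
  eapply ev_comp1; [| apply ev_iterate].
  eapply ev_comp1; [apply ev_cantor | constructor].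
Qed.

End OraclePrograms.

Lemma escape (f : nat -> nat) (A : nat -> nat -> nat) :
  ~ finitely_covered f A ->
  forall s c, exists k, c < k /\ forall i, i <= s -> f k <> A i k.
Proof.
  intros Hf s c; apply NNPP; intros Hno; apply Hf.
  exists (seq 0 (S s)), (S c); intros k Hk.
  apply NNPP; intros Hk'; apply Hno; exists k; split; [lia|].
  intros i Hi Heq; apply Hk'; exists i; split; [apply in_seq; lia | exact Heq].
Qed.

Fixpoint bound (A : nat -> nat -> nat) (n x : nat) : nat :=
  match n with 0 => A 0 x | S n' => bound A n' x + A (S n') x end.

Lemma bound_ge A n i x : i <= n -> A i x <= bound A n x.
Proof.
  induction n as [|n IH]; intros Hi; simpl.
  - replace i with 0 by lia; lia.
  - destruct (Nat.eq_dec i (S n)) as [->|]; [lia|].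
    specialize (IH ltac:(lia)); lia.
Qed.

Definition preimage (h : nat -> nat) (k : nat) : nat :=
  epsilon (inhabits 0) (fun s => h s = k).

Lemma preimage_injective h s :
  (forall s t, h s = h t -> s = t) -> preimage h (h s) = s.
Proof.
  intros Hinj; apply Hinj, (epsilon_spec (inhabits 0) (fun t => h t = h s)).
  now exists s.
Qed.

Section Interleaving.

Variables c m : nat -> nat.
Hypothesis c_lt_m : forall s, c s < m s.
Hypothesis m_lt_c : forall s, m s < c (S s).

Lemma m_lt_c_later s t : s < t -> m s < c t.
Proof.
  induction t as [|t IH]; intros Hst; [lia|].
  pose proof (m_lt_c t); pose proof (c_lt_m t).
  destruct (Nat.eq_dec s t) as [->|]; [lia|]. specialize (IH ltac:(lia)); lia.
Qed.

Lemma c_increasing s t : s < t -> c s < c t.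
Proof. intros Hst; pose proof (c_lt_m s); pose proof (m_lt_c_later s t Hst); lia. Qed.

Lemma c_ge s : s <= c s.
Proof.
  induction s as [|s IH]; [lia|]. pose proof (c_increasing s (S s)); lia.
Qed.

Lemma c_injective s t : c s = c t -> s = t.
Proof.
  intros Heq; destruct (Nat.lt_total s t) as [H|[H|H]]; auto;
    [pose proof (c_increasing s t H) | pose proof (c_increasing t s H)]; lia.
Qed.

Lemma m_injective s t : m s = m t -> s = t.
Proof.
  intros Heq; destruct (Nat.lt_total s t) as [H|[H|H]]; auto;
    [pose proof (m_lt_c_later s t H); pose proof (c_lt_m t)
    | pose proof (m_lt_c_later t s H); pose proof (c_lt_m s)]; lia.
Qed.

Lemma c_ne_m s t : c s <> m t.
Proof.
  destruct (le_lt_dec s t) as [H|H].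
  - destruct (Nat.eq_dec s t) as [->|]; [pose proof (c_lt_m t); lia|].
    pose proof (c_increasing s t ltac:(lia)); pose proof (c_lt_m t); lia.
  - pose proof (m_lt_c_later t s H); lia.
Qed.

Definition piecewise (vc vm d : nat -> nat) (k : nat) : nat :=
  if excluded_middle_informative (exists s, c s = k) then vc (preimage c k)
  else if excluded_middle_informative (exists s, m s = k) then vm (preimage m k)
  else d k.

Variables vc vm d : nat -> nat.

Lemma piecewise_c s : piecewise vc vm d (c s) = vc s.
Proof.
  unfold piecewise; destruct excluded_middle_informative as [_|Hno].
  - now rewrite preimage_injective by exact c_injective.
  - exfalso; apply Hno; now exists s.
Qed.

Lemma piecewise_m s : piecewise vc vm d (m s) = vm s.
Proof.
  unfold piecewise; destruct excluded_middle_informative as [[t Ht]|_].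
  - exfalso; exact (c_ne_m t s Ht).
  - destruct excluded_middle_informative as [_|Hno].
    + now rewrite preimage_injective by exact m_injective.
    + exfalso; apply Hno; now exists s.
Qed.

Lemma piecewise_other k :
  (forall s, c s <> k) -> (forall s, m s <> k) -> piecewise vc vm d k = d k.
Proof.
  intros Hc Hm; unfold piecewise.
  destruct excluded_middle_informative as [[s Hs]|_]; [now destruct (Hc s)|].
  destruct excluded_middle_informative as [[s Hs]|_]; [now destruct (Hm s)|].
  reflexivity.
Qed.

End Interleaving.

Section Construction.

Variables (A F : nat -> nat -> nat) (E : nat -> nat -> Prop).

(* Stage s = <n, N> serves the requirement "meet F n beyond N" and codes
   the bit E(a, b) for s = <a, b>. *)
Definition requirement (s : nat) : nat := fst (of_nat s).

Definition bit (s : nat) : nat :=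
  if excluded_middle_informative (E (fst (of_nat s)) (snd (of_nat s))) then 1 else 0.

Definition meet (s c : nat) : nat :=
  epsilon (inhabits 0)
    (fun k => c < k /\ forall i, i <= s -> F (requirement s) k <> A i k).

(* Coding positions c_s: c_(s+1) exceeds m_s and A 0 (c_s), ..., A s (c_s),
   and its parity is the bit of stage s. *)
Fixpoint cpos (s : nat) : nat :=
  match s with
  | 0 => 0
  | S s' => 2 * (meet s' (cpos s') + bound A s' (cpos s') + 1) + bit s'
  end.

Definition mpos (s : nat) : nat := meet s (cpos s).

Definition gen : nat -> nat :=
  piecewise cpos mpos (fun s => cpos (S s)) (fun s => F (requirement s) (mpos s))
    (fun k => S (bound A k k)).

Hypothesis uncovered : not_finitely_covered F A.

Lemma meet_spec s c :
  c < meet s c /\ forall i, i <= s -> F (requirement s) (meet s c) <> A i (meet s c).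
Proof. unfold meet; apply epsilon_spec, escape, uncovered. Qed.

Lemma cpos_lt_mpos s : cpos s < mpos s.
Proof. apply meet_spec. Qed.

Lemma cpos_S s : cpos (S s) = 2 * (mpos s + bound A s (cpos s) + 1) + bit s.
Proof. reflexivity. Qed.

Lemma mpos_lt_cpos s : mpos s < cpos (S s).
Proof. rewrite cpos_S; lia. Qed.

Lemma gen_cpos s : gen (cpos s) = cpos (S s).
Proof. exact (piecewise_c cpos mpos cpos_lt_mpos mpos_lt_cpos _ _ _ s). Qed.

Lemma gen_mpos s : gen (mpos s) = F (requirement s) (mpos s).
Proof. exact (piecewise_m cpos mpos cpos_lt_mpos mpos_lt_cpos _ _ _ s). Qed.

Lemma gen_almost_disjoint m : almost_disjoint gen (A m).
Proof.
  exists (cpos m + m); intros k Hk.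
  destruct (classic (exists s, cpos s = k)) as [[s <-]|Hc].
  - rewrite gen_cpos, cpos_S in Hk.
    destruct (le_lt_dec m s) as [Hms|Hsm].
    + pose proof (bound_ge A s m (cpos s) Hms); lia.
    + pose proof (c_increasing _ _ cpos_lt_mpos mpos_lt_cpos s m Hsm); lia.
  - destruct (classic (exists s, mpos s = k)) as [[s <-]|Hm].
    + rewrite gen_mpos in Hk.
      destruct (le_lt_dec m s) as [Hms|Hsm].
      * exfalso; exact (proj2 (meet_spec s (cpos s)) m Hms Hk).
      * pose proof (m_lt_c_later _ _ cpos_lt_mpos mpos_lt_cpos s m Hsm); lia.
    + unfold gen in Hk; rewrite piecewise_other in Hk
        by (intros s Hs; eauto).
      destruct (le_lt_dec m k) as [Hmk|]; [|lia].
      pose proof (bound_ge A k m k Hmk); lia.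
Qed.

Lemma gen_iterate n : Nat.iter n gen 0 = cpos n.
Proof. induction n as [|n IH]; [reflexivity|]. simpl; now rewrite IH, gen_cpos. Qed.

Lemma cpos_parity s : Nat.b2n (Nat.odd (cpos (S s))) = bit s.
Proof.
  rewrite cpos_S, Nat.add_comm, Nat.odd_add_mul_2.
  unfold bit; now destruct excluded_middle_informative.
Qed.

Lemma gen_computes_E : recursive_in E gen.
Proof.
  exists decoderp; intros a b.
  pose proof (ev_decoder gen a b) as Hev.
  rewrite gen_iterate, cpos_parity in Hev; unfold bit in Hev.
  rewrite cancel_of_to in Hev; simpl in Hev.
  split; intros He; destruct excluded_middle_informative; tauto.
Qed.

Lemma gen_meets n N : exists k, N <= k /\ F n k = gen k.
Proof.
  exists (mpos (to_nat (n, N))); split.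
  - pose proof (to_nat_non_decreasing n N).
    pose proof (c_ge _ _ cpos_lt_mpos mpos_lt_cpos (to_nat (n, N))).
    pose proof (cpos_lt_mpos (to_nat (n, N))); lia.
  - rewrite gen_mpos; unfold requirement; now rewrite cancel_of_to.
Qed.

End Construction.

Theorem mainTheorem7 (A : nat -> (nat -> nat)) (E : nat -> nat -> Prop)
    (F : nat -> (nat -> nat)) :
  ad_family A ->
  not_finitely_covered F A ->
  exists g : nat -> nat,
    (forall n, almost_disjoint g (A n)) /\
    recursive_in E g /\
    (forall n, forall N, exists k, N <= k /\ F n k = g k).
Proof.
  intros _ Huncovered; exists (gen A F E); split; [|split].
  - intros n; exact (gen_almost_disjoint A F E Huncovered n).
  - exact (gen_computes_E A F E Huncovered).
  - exact (gen_meets A F E Huncovered).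
Qed.
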